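(* Let $\mathbb{F}$ be a field, $m,k,d,d'\in\mathbb{N}$, and $G,K,L$ finite subsets of $\mathbb{F}$ with $K\subseteq L$, $d'\ge|G|-2$ and $|K|=d+1$. Let $S\subseteq\mathbb{F}^{m+k}$ be a finite set and suppose there exist matrices $C\in\mathbb{F}^{L^m\times\ell}$ and $D\in\mathbb{F}^{S\times\ell}$ such that for all $Z\in\mathbb{F}^{\le d,\le d'}[X_1,\dots,X_m,Y_1,\dots,Y_k]$ and all $i\in\{1,\dots,\ell\}$, $$\sum_{\vec\alpha\in L^m}C_{\vec\alpha,i}\sum_{\vec y\in G^k}Z(\vec\alpha,\vec y)=\sum_{\vec q\in S}D_{\vec q,i}\,Z(\vec q).$$ Then $|S|\ge \mathrm{rank}(BC)\cdot\big(\min\{d'-|G|+2,\ |G|\}\big)^k$, where $B\in\mathbb{F}^{K^m\times L^m}$ is the matrix such that for every $\vec\alpha\in L^m$ and every polynomial $p\in\mathbb{F}[X_1,\dots,X_m]$ of individual degree at most $d$, $p(\vec\alpha)=\sum_{\vec\beta\in K^m}B_{\vec\beta,\vec\alpha}\,p(\vec\beta)$.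
   Context: $\mathbb{F}^{\le d,\le d'}[X_1,\dots,X_m,Y_1,\dots,Y_k]$ denotes the set of $(m+k)$-variate polynomials over $\mathbb{F}$ of individual degree at most $d$ in each of $X_1,\dots,X_m$ and at most $d'$ in each of $Y_1,\dots,Y_k$. Matrices indexed by sets $A\times B$ have rows indexed by $A$ and columns by $B$. *)

From HB Require Import structures.
From mathcomp Require Import all_boot all_order all_algebra.
Set Implicit Arguments. Unset Strict Implicit. Unset Printing Implicit Defensive.
Import Order.TTheory GRing.Theory Num.Theory.
Local Open Scope ring_scope.

(* Index type of the grid s^n for a finite set s (given as a uniq seq):
   an n-tuple of positions in s. *)
Definition gridIdx (n : nat) (F : Type) (s : seq F) := {ffun 'I_n -> 'I_(size s)}.

Definition gridPt (F : nzRingType) (n : nat) (s : seq F) (a : gridIdx n s) : 'I_n -> F :=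
  fun j => nth 0 s (a j).

(* Polynomials in n variables of individual degree <= dg, given by their
   coefficient family (one coefficient per exponent vector in {0..dg}^n). *)
Definition mpoly_ideg (F : nzRingType) (n dg : nat) := {ffun {ffun 'I_n -> 'I_dg.+1} -> F}.

Definition mpeval (F : nzRingType) (n dg : nat) (p : mpoly_ideg F n dg) (x : 'I_n -> F) : F :=
  \sum_(e : {ffun 'I_n -> 'I_dg.+1}) p e * \prod_(j < n) x j ^+ e j.

(* Polynomials in F^{<=d,<=d'}[X_1..X_m,Y_1..Y_k]: coefficient per exponent
   pair (eX in {0..d}^m, eY in {0..d'}^k). *)
Definition mpoly2 (F : nzRingType) (m k d d' : nat) :=
  {ffun ({ffun 'I_m -> 'I_d.+1} * {ffun 'I_k -> 'I_d'.+1}) -> F}.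

Definition mpeval2 (F : nzRingType) (m k d d' : nat) (Z : mpoly2 F m k d d')
  (x : 'I_m -> F) (y : 'I_k -> F) : F :=
  \sum_(e : {ffun 'I_m -> 'I_d.+1} * {ffun 'I_k -> 'I_d'.+1})
     Z e * ((\prod_(j < m) x j ^+ e.1 j) * (\prod_(j < k) y j ^+ e.2 j)).

(* Evaluation at a point q of F^{m+k} (first m coordinates are X, last k are Y). *)
Definition mpeval2_pt (F : nzRingType) (m k d d' : nat) (Z : mpoly2 F m k d d')
  (q : 'rV[F]_(m + k)) : F :=
  mpeval2 Z (fun j => q 0 (lshift k j)) (fun j => q 0 (rshift m j)).

From HB Require Import structures.
From mathcomp Require Import all_boot all_order all_algebra.
From mathcomp Require Import zify.
Set Implicit Arguments.
Unset Strict Implicit.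
Unset Printing Implicit Defensive.

Import GRing.Theory.
Local Open Scope ring_scope.

(* Let r = rank(BC) and t = min(d' - |G| + 2, |G|).  Choose r rows of BC that
   are linearly independent; each is indexed by a point b_j of K^m.  Let Gt be
   t of the points of G.  For each pair (j, c) with c in Gt^k, restrict to S the
   product of the Lagrange polynomial of K^m at b_j (in X) and of Gt^k at c
   (in Y).  These r t^k vectors of F^S are linearly independent, whence the
   bound.  Given a vanishing combination with coefficients v, fix c0 in Gt^k
   and multiply each Y-part by the Lagrange polynomial of G^k at c0.  Since
   t + |G| - 2 <= d' the resulting Z is admissible; it vanishes on S, so the
   C-D identity makes the left-hand side zero.  Summing Z over G^k keeps only
   the terms with c = c0, and the interpolation property of B turns the X-part
   at a point of L^m into the corresponding column of B.  Hence the coefficients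
   v(., c0) give a vanishing combination of the chosen rows of BC. *)

Section LagrangeSeq.
Variables (F : fieldType) (s : seq F).

(* The library's [x.-lagrange] needs nodes [x : nat -> F] injective on all
   of [nat], which a finite node set cannot provide. *)
Definition lagrange_seq (a : F) : {poly F} :=
  let p := \prod_(y <- s | y != a) ('X - y%:P) in p.[a]^-1 *: p.

Lemma lagrange_seq_sample a b : b \in s -> (lagrange_seq a).[b] = (a == b)%:R.
Proof.
move=> sb; rewrite /lagrange_seq hornerZ.
have [<-|neq_ab] := eqVneq.
  rewrite mulVf // horner_prod prodf_seq_neq0; apply/allP => y _.
  by apply/implyP; rewrite hornerXsubC subr_eq0 eq_sym.
apply/eqP; rewrite mulf_eq0; apply/orP; right; rewrite horner_prod prodf_seq_eq0.
by apply/hasP; exists b; rewrite // eq_sym neq_ab hornerXsubC subrr eqxx.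
Qed.

Lemma size_lagrange_seq a : a \in s -> (size (lagrange_seq a) <= size s)%N.
Proof.
move=> sa; apply: leq_trans (size_scale_leq _ _) _.
rewrite -big_filter size_prod_XsubC size_filter -(count_predC (pred1 a)).
by rewrite addnC -addn1 leq_add2l -has_count has_pred1.
Qed.

Lemma sum_lagrange_seq (p : {poly F}) a : uniq s -> a \in s ->
  \sum_(x <- s) p.[x] * (lagrange_seq a).[x] = p.[a].
Proof.
move=> us sa; rewrite (bigD1_seq a) //= lagrange_seq_sample // eqxx mulr1.
rewrite big_seq_cond big1 ?addr0 // => x /andP[sx xa].
by rewrite lagrange_seq_sample // eq_sym (negbTE xa) mulr0.
Qed.

End LagrangeSeq.

Lemma prodr_eq_ffun (R : comNzRingType) (I J : finType) (f g : {ffun I -> J}) :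
  \prod_i ((f i == g i)%:R : R) = (f == g)%:R.
Proof.
have [->|/eqP neq_fg] := eqVneq f g; first by apply: big1 => i _; rewrite eqxx.
have [i /negbTE neq_i] : exists i, f i != g i.
  by apply/existsP; apply: contra_notT neq_fg => /existsPn eq_fg; apply/ffunP => i; apply/eqP/negPn.
by rewrite (bigD1 i) //= neq_i mul0r.
Qed.

Lemma gridPt_mem (F : nzRingType) n (s : seq F) (b : gridIdx n s) i : gridPt b i \in s.
Proof. exact: mem_nth. Qed.

Lemma prod_lagrange_gridPt (F : fieldType) n (s : seq F) (b c : gridIdx n s) : uniq s ->
  \prod_i (lagrange_seq s (gridPt b i)).[gridPt c i] = (b == c)%:R.
Proof.
move=> us; rewrite -prodr_eq_ffun; apply: eq_bigr => i _.
by rewrite lagrange_seq_sample ?gridPt_mem // /gridPt nth_uniq.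
Qed.

Lemma sum_gridPt_prod (F : comNzRingType) n (s : seq F) (f : 'I_n -> F -> F) :
  \sum_(g : gridIdx n s) \prod_i f i (gridPt g i) = \prod_i \sum_(x <- s) f i x.
Proof.
transitivity (\prod_i \sum_(w < size s) f i s`_w).
  by rewrite bigA_distr_bigA.
by apply: eq_bigr => i _; rewrite (big_nth 0) big_mkord.
Qed.

Section ProductPolynomials.
Variable F : comNzRingType.

Definition mpoly_prod n dg (P : 'I_n -> {poly F}) : mpoly_ideg F n dg :=
  [ffun e : {ffun 'I_n -> 'I_dg.+1} => \prod_i (P i)`_(e i)].

Lemma mpeval_prod n dg (P : 'I_n -> {poly F}) x :
  (forall i, size (P i) <= dg.+1)%N -> mpeval (mpoly_prod dg P) x = \prod_i (P i).[x i].
Proof.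
move=> sizeP; rewrite /mpeval.
transitivity (\sum_(e : {ffun 'I_n -> 'I_dg.+1}) \prod_i ((P i)`_(e i) * x i ^+ e i)).
  by apply: eq_bigr => e _; rewrite ffunE big_split.
rewrite -(bigA_distr_bigA (fun i (j : 'I_dg.+1) => (P i)`_j * x i ^+ j)).
by apply: eq_bigr => i _; rewrite (horner_coef_wide _ (sizeP i)).
Qed.

Definition mpoly_sum_tensor m k d d' (I : finType) (v : I -> F)
    (P : I -> mpoly_ideg F m d) (Q : I -> mpoly_ideg F k d') : mpoly2 F m k d d' :=
  [ffun e => \sum_t v t * (P t e.1 * Q t e.2)].

Lemma mpeval2_sum_tensor m k d d' (I : finType) (v : I -> F)
    (P : I -> mpoly_ideg F m d) (Q : I -> mpoly_ideg F k d') x y :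
  mpeval2 (mpoly_sum_tensor v P Q) x y = \sum_t v t * (mpeval (P t) x * mpeval (Q t) y).
Proof.
rewrite /mpeval2; under eq_bigr => e _ do rewrite ffunE big_distrl.
rewrite exchange_big; apply: eq_bigr => t _.
rewrite /mpeval big_distrlr pair_bigA big_distrr; apply: eq_bigr => e _ /=.
by rewrite -[LHS]mulrA mulrACA.
Qed.

End ProductPolynomials.

Section GridLowerBound.
Variables (F : fieldType) (m k d d' l : nat) (G K L : seq F) (S : seq 'rV[F]_(m + k)).
Variables (C : 'M[F]_(#|{: gridIdx m L}|, l)) (D : 'M[F]_(size S, l))
  (B : 'M[F]_(#|{: gridIdx m K}|, #|{: gridIdx m L}|)).
Hypotheses (G_uniq : uniq G) (K_uniq : uniq K).
Hypotheses (size_G : (size G - 2 <= d')%N) (size_K : size K = d.+1).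
Hypothesis B_interp : forall (p : mpoly_ideg F m d) (a : gridIdx m L),
  mpeval p (gridPt a) =
  \sum_(b : gridIdx m K) B (enum_rank b) (enum_rank a) * mpeval p (gridPt b).
Hypothesis CD_ident : forall (Z : mpoly2 F m k d d') (i : 'I_l),
  \sum_(a : gridIdx m L) C (enum_rank a) i *
     \sum_(g : gridIdx k G) mpeval2 Z (gridPt a) (gridPt g)
  = \sum_(q < size S) D q i * mpeval2_pt Z (nth 0 S q).

Local Notation t := (minn (d'.+2 - size G)%N (size G)).
Local Notation Gt := (take t G).
Local Notation A := (B *m C).
Local Notation rowsel := (maxrankfun A).

Lemma size_Gt : size Gt = t.
Proof. by rewrite size_takel // geq_minr. Qed.

Definition xlagrange (b : gridIdx m K) : mpoly_ideg F m d :=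
  mpoly_prod d (fun i => lagrange_seq K (gridPt b i)).

Definition ylagrange (c c0 : gridIdx k Gt) : mpoly_ideg F k d' :=
  mpoly_prod d' (fun i => lagrange_seq Gt (gridPt c i) * lagrange_seq G (gridPt c0 i)).

Lemma mpeval_xlagrange b x :
  mpeval (xlagrange b) x = \prod_i (lagrange_seq K (gridPt b i)).[x i].
Proof. by rewrite mpeval_prod // => i; rewrite -size_K size_lagrange_seq ?gridPt_mem. Qed.

Lemma mpeval_ylagrange c c0 y :
  mpeval (ylagrange c c0) y =
  \prod_i ((lagrange_seq Gt (gridPt c i)).[y i] * (lagrange_seq G (gridPt c0 i)).[y i]).
Proof.
rewrite mpeval_prod => [|i]; first by under eq_bigr do rewrite hornerM.
apply: leq_trans (size_polyMleq _ _) _.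
have sizeGt := size_lagrange_seq (gridPt_mem c i); rewrite size_Gt in sizeGt.
have sizeG := size_lagrange_seq (mem_take (gridPt_mem c0 i)).
rewrite -subn1; apply: leq_trans (leq_sub2r 1 (leq_add sizeGt sizeG)) _; lia.
Qed.

Lemma xlagrange_gridPt b a : mpeval (xlagrange b) (gridPt a) = B (enum_rank b) (enum_rank a).
Proof.
rewrite B_interp (bigD1 b) //= big1 => [|b' neq_b'b].
  by rewrite mpeval_xlagrange prod_lagrange_gridPt // eqxx mulr1 addr0.
by rewrite mpeval_xlagrange prod_lagrange_gridPt // eq_sym (negbTE neq_b'b) mulr0.
Qed.

Lemma sum_ylagrange_gridPt c c0 :
  \sum_(g : gridIdx k G) mpeval (ylagrange c c0) (gridPt g) = (c == c0)%:R.
Proof.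
under eq_bigr do rewrite mpeval_ylagrange.
rewrite (@sum_gridPt_prod _ _ G (fun i x =>
  (lagrange_seq Gt (gridPt c i)).[x] * (lagrange_seq G (gridPt c0 i)).[x])).
rewrite -prod_lagrange_gridPt ?take_uniq //; apply: eq_bigr => i _.
by rewrite sum_lagrange_seq // (mem_take (gridPt_mem c0 i)).
Qed.

(* Row (j, c) of the test matrix: the j-th selected row of [A] (a point of
   K^m) paired with a point c of Gt^k. *)
Local Notation T := ('I_(\rank A) * gridIdx k Gt)%type.

Definition xcoord (q : 'I_(size S)) : 'I_m -> F := fun j => S`_q 0 (lshift k j).
Definition ycoord (q : 'I_(size S)) : 'I_k -> F := fun j => S`_q 0 (rshift m j).

Definition test_matrix : 'M[F]_(#|{: T}|, size S) :=
  \matrix_(tau, q) (mpeval (xlagrange (enum_val (rowsel (enum_val tau).1))) (xcoord q) *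
                    \prod_i (lagrange_seq Gt (gridPt (enum_val tau).2 i)).[ycoord q i]).

Definition test_poly (v : 'rV[F]_#|{: T}|) (c0 : gridIdx k Gt) : mpoly2 F m k d d' :=
  mpoly_sum_tensor (fun tau => v 0 tau)
    (fun tau => xlagrange (enum_val (rowsel (enum_val tau).1)))
    (fun tau => ylagrange (enum_val tau).2 c0).

Lemma test_poly_S v c0 (q : 'I_(size S)) :
  v *m test_matrix = 0 -> mpeval2_pt (test_poly v c0) S`_q = 0.
Proof.
move=> /rowP/(_ q); rewrite !mxE => vU0.
rewrite /mpeval2_pt mpeval2_sum_tensor.
transitivity ((\sum_tau v 0 tau * test_matrix tau q) *
              \prod_i (lagrange_seq G (gridPt c0 i)).[ycoord q i]).
  rewrite mulr_suml; apply: eq_bigr => tau _.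
  by rewrite mxE mpeval_ylagrange big_split /= !mulrA.
by rewrite vU0 mul0r.
Qed.

Lemma test_poly_gridPt v c0 a :
  \sum_(g : gridIdx k G) mpeval2 (test_poly v c0) (gridPt a) (gridPt g) =
  \sum_j v 0 (enum_rank (j, c0)) * B (rowsel j) (enum_rank a).
Proof.
under eq_bigr do rewrite mpeval2_sum_tensor.
rewrite exchange_big /=.
under eq_bigr do rewrite -big_distrr -big_distrr /= sum_ylagrange_gridPt xlagrange_gridPt enum_valK.
rewrite (reindex enum_rank (onW_bij _ (@enum_rank_bij _))) /=.
under eq_bigr do rewrite enum_rankK.
transitivity (\sum_j \sum_(c : gridIdx k Gt)
  v 0 (enum_rank (j, c)) * (B (rowsel j) (enum_rank a) * (c == c0)%:R)).
  by rewrite pair_bigA; apply: eq_bigr => -[].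
apply: eq_bigr => j _; rewrite (bigD1 c0) //= eqxx mulr1 big1 ?addr0 // => c neq_cc0.
by rewrite (negbTE neq_cc0) !mulr0.
Qed.

Lemma row_free_test_matrix : row_free test_matrix.
Proof.
apply/inj_row_free => v vU0; apply/rowP => tau; rewrite mxE.
rewrite -[tau]enum_valK; case: (enum_val tau) => j0 c0.
suff /rowP/(_ j0) : \row_j v 0 (enum_rank (j, c0)) = 0 :> 'rV_(\rank A) by rewrite !mxE.
apply: (row_free_inj (maxrowsub_free A)); rewrite /= mul0mx; apply/rowP => i; rewrite !mxE.
have := CD_ident (test_poly v c0) i.
rewrite [RHS]big1 => [|q _]; last by rewrite test_poly_S ?mulr0.
under eq_bigr do rewrite test_poly_gridPt.
move=> CD0; rewrite -[RHS]CD0.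
under eq_bigr do rewrite big_distrr.
rewrite exchange_big; apply: eq_bigr => j _ /=.
rewrite !mxE big_distrr (reindex enum_rank (onW_bij _ (@enum_rank_bij _))); apply: eq_bigr => a _.
by rewrite /= [RHS]mulrCA [X in _ * X = _]mulrC.
Qed.

Lemma card_test_rows : #|{: T}| = (\rank A * t ^ k)%N.
Proof.
rewrite card_prod card_ord; congr (_ * _)%N.
transitivity (size Gt ^ k)%N; last by rewrite size_Gt.
by rewrite card_ffun; congr (_ ^ _)%N; exact: card_ord.
Qed.

End GridLowerBound.

Theorem lemma8p1 (F : fieldType) (m k d d' l : nat) (G K L : seq F)
  (S : seq 'rV[F]_(m + k))
  (C : 'M[F]_(#|{: gridIdx m L}|, l)) (D : 'M[F]_(size S, l))
  (B : 'M[F]_(#|{: gridIdx m K}|, #|{: gridIdx m L}|)) :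
  uniq G -> uniq K -> uniq L -> uniq S ->
  {subset K <= L} ->
  (size G - 2 <= d')%N ->
  size K = d.+1 ->
  (forall (p : mpoly_ideg F m d) (a : gridIdx m L),
      mpeval p (gridPt a) =
      \sum_(b : gridIdx m K) B (enum_rank b) (enum_rank a) * mpeval p (gridPt b)) ->
  (forall (Z : mpoly2 F m k d d') (i : 'I_l),
      \sum_(a : gridIdx m L) C (enum_rank a) i *
         \sum_(g : gridIdx k G) mpeval2 Z (gridPt a) (gridPt g)
      = \sum_(q < size S) D q i * mpeval2_pt Z (nth 0 S q)) ->
  (\rank (B *m C) * (minn (d'.+2 - size G) (size G)) ^ k <= size S)%N.
Proof.
move=> G_uniq K_uniq _ _ _ size_G size_K B_interp CD_ident.
have /eqP rank_test := row_free_test_matrix G_uniq K_uniq size_G size_K B_interp CD_ident.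
by rewrite -card_test_rows -rank_test rank_leq_col.
Qed.
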